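(* Let $\Bbbk$ be a field and let $n,k$ be integers with $1 < k < n$. For each subset $I\subseteq\{0,\ldots,n\}$ of size $k+1$, let $\mathbb{P}^k_I$ be a copy of $\mathbb{P}^k$ with homogeneous coordinates $(x^I_j)_{j\in I}$, and let $U\subset \prod_I \mathbb{P}^k_I$ be the set of points $(P_I)_I$ all of whose coordinates $x^I_j$ are nonzero. Let $V\subseteq U$ be the set of $(P_I)_I\in U$ for which there exists a point $P=(x_0:\cdots:x_n)\in\mathbb{P}^n$ with $P_I = (x_j)_{j\in I}$ (as a point of $\mathbb{P}^k_I$) for every $I$. Let $M_{n,k}$ be the partially specified $\binom{n+1}{k+1}\times(n+1)$ matrix with rows indexed by the subsets $I$ and columns indexed by $j\in\{0,\ldots,n\}$, whose $(I,j)$ entry is $x^I_j$ if $j\in I$ and is unspecified otherwise. Then $V$ is the set of points of $U$ at which all $2\times 2$ minors of $M_{n,k}$ containing no unspecified entries vanish, i.e. the set of $(P_I)_I\in U$ such that \[ x^I_i x^J_j - x^I_j x^J_i = 0 \] for all subsets $I,J$ of size $k+1$ and all $i,j\in I\cap J$.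
   Context: $\mathbb{P}^m$ denotes projective $m$-space over $\Bbbk$, points written in homogeneous coordinates up to a common nonzero scalar. For $I=\{i_0<\cdots<i_k\}$, the projection $\pi_I\colon\mathbb{P}^n\dashrightarrow\mathbb{P}^k$, $(x_0:\cdots:x_n)\mapsto(x_{i_0}:\cdots:x_{i_k})$, is the projection of $\mathbb{P}^n$ onto the coordinate subspace $\langle I\rangle=\{x_j=0 \text{ for } j\notin I\}$; $V$ is the intersection of $U$ with the image of the rational map $\mathbb{P}^n\dashrightarrow\prod_I\mathbb{P}^k_I$ whose components are the $\pi_I$. Geometrically, a point of $U$ is a choice of a point in (the span of) each $k$-dimensional face of the coordinate $n$-simplex, and $V$ is the locus where these are all projections of one point of $\mathbb{P}^n$. *)

From mathcomp Require Import all_boot all_order all_algebra.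
Set Implicit Arguments. Unset Strict Implicit. Unset Printing Implicit Defensive.
Import GRing.Theory.
Local Open Scope ring_scope.

(* Index set {0,...,n} is 'I_n.+1.  A family of points (P_I)_I of the
   product of the P^k_I is given by homogeneous coordinate representatives
   x : {set 'I_n.+1} -> 'I_n.+1 -> K, where x I j is the coordinate x^I_j
   (only the values for #|I| = k+1 and j \in I are meaningful). *)
Definition coord_family (K : fieldType) (n : nat) :=
  {set 'I_n.+1} -> 'I_n.+1 -> K.

Definition ksub (n k : nat) (I : {set 'I_n.+1}) : bool := #|I| == k.+1.

Definition inU (K : fieldType) (n k : nat) (x : coord_family K n) : Prop :=
  forall I : {set 'I_n.+1}, ksub k I -> forall j, j \in I -> x I j != 0.

Definition same_proj_point (K : fieldType) (n : nat) (I : {set 'I_n.+1})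
    (u v : 'I_n.+1 -> K) : Prop :=
  exists c : K, c != 0 /\ forall j, j \in I -> u j = c * v j.

Definition inV (K : fieldType) (n k : nat) (x : coord_family K n) : Prop :=
  inU k x /\
  exists P : 'I_n.+1 -> K, (exists j, P j != 0) /\
    forall I : {set 'I_n.+1}, ksub k I -> same_proj_point I (x I) P.

From mathcomp Require Import all_boot all_order all_algebra.
From mathcomp Require Import ring.
Set Implicit Arguments. Unset Strict Implicit. Unset Printing Implicit Defensive.
Local Open Scope ring_scope.
Import GRing.Theory.

(* On U the vanishing of the minors says exactly that the ratio
   x^I_j / x^I_i does not depend on the subset I containing i and j.  Since
   k >= 2, any three indices lie in a common subset I, so fixing the base
   index 0 the numbers P_j := x^I_j / x^I_0 form a well-defined point of P^n,
   and x^I_j = (x^I_a / P_a) P_j for every a, j in I. *)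

Lemma superset_of_card (T : finType) (A : {set T}) (m : nat) :
  (#|A| <= m)%N -> (m <= #|T|)%N -> exists2 B : {set T}, A \subset B & #|B| = m.
Proof.
elim: m => [|m IH] leAm lemT.
  by exists A => //; apply/eqP; rewrite -leqn0.
have [ltAm | geAm] := ltnP #|A| m.+1.
  2: by exists A => //; apply/eqP; rewrite eqn_leq leAm.
have [B sAB cardB] := IH ltAm (ltnW lemT).
have /subsetPn[y _ yNB] : ~~ ([set: T] \subset B).
  by apply/negP => /subset_leq_card; rewrite cardsT cardB leqNgt lemT.
by exists (y |: B); [apply: subsetU; rewrite sAB orbT | rewrite cardsU1 yNB cardB].
Qed.

Definition minors_vanish (K : fieldType) (n k : nat) (x : coord_family K n) :=
  forall I J : {set 'I_n.+1}, ksub k I -> ksub k J ->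
    forall i j : 'I_n.+1, i \in I :&: J -> j \in I :&: J ->
      x I i * x J j - x I j * x J i = 0.

Lemma same_proj_point_minor (K : fieldType) (n : nat) (I J : {set 'I_n.+1})
    (u v P : 'I_n.+1 -> K) (i j : 'I_n.+1) :
  same_proj_point I u P -> same_proj_point J v P ->
  i \in I :&: J -> j \in I :&: J -> u i * v j - u j * v i = 0.
Proof.
move=> [cI [_ uP]] [cJ [_ vP]] /setIP[iI iJ] /setIP[jI jJ].
by rewrite uP // vP // uP // vP //; ring.
Qed.

Lemma inV_minors_vanish (K : fieldType) (n k : nat) (x : coord_family K n) :
  inV k x -> minors_vanish k x.
Proof.
move=> [_ [P [_ xP]]] I J kI kJ i j.
exact: same_proj_point_minor (xP I kI) (xP J kJ).
Qed.

Section MinorsVanishInV.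

Variables (K : fieldType) (n k : nat) (x : coord_family K n).
Hypotheses (k_gt1 : (1 < k)%N) (k_le_n : (k <= n)%N).
Hypotheses (xU : inU k x) (x_minors : minors_vanish k x).

Lemma ksub_through (a b c : 'I_n.+1) :
  exists T, [&& ksub k T, a \in T, b \in T & c \in T].
Proof.
have cardabc : (#|a |: (b |: [set c])| <= k.+1)%N.
  rewrite !cardsU1 cards1 (@leq_trans 3) //.
  by case: (a \notin _); case: (b \notin _).
have [|T sabcT cardT] := superset_of_card cardabc; first by rewrite card_ord.
exists T; rewrite /ksub cardT eqxx.
by rewrite !(subsetP sabcT) // !inE eqxx ?orbT.
Qed.

Lemma coord_ratio_indep (T T' : {set 'I_n.+1}) (i j : 'I_n.+1) :
  ksub k T -> ksub k T' -> i \in T -> j \in T -> i \in T' -> j \in T' ->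
  x T j / x T i = x T' j / x T' i.
Proof.
move=> kT kT' iT jT iT' jT'.
apply/eqP; rewrite eqr_div ?xU //; apply/eqP.
have [iTT' jTT'] : i \in T :&: T' /\ j \in T :&: T' by rewrite !inE iT iT' jT jT'.
have /eqP := x_minors kT kT' jTT' iTT'.
by rewrite subr_eq0 mulrC => /eqP ->; rewrite mulrC.
Qed.

Definition glued_point (j : 'I_n.+1) : K :=
  let T := xchoose (ksub_through ord0 j j) in x T j / x T ord0.

Lemma glued_pointE (T : {set 'I_n.+1}) (j : 'I_n.+1) :
  ksub k T -> ord0 \in T -> j \in T -> glued_point j = x T j / x T ord0.
Proof.
move=> kT zT jT; rewrite /glued_point.
have /and4P[kF zF jF _] := xchooseP (ksub_through ord0 j j).
exact: coord_ratio_indep.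
Qed.

Lemma glued_point_neq0 (j : 'I_n.+1) : glued_point j != 0.
Proof.
have /and4P[kF zF jF _] := xchooseP (ksub_through ord0 j j).
by rewrite mulf_neq0 ?invr_eq0 ?xU.
Qed.

Lemma same_proj_point_glued (I : {set 'I_n.+1}) :
  ksub k I -> same_proj_point I (x I) glued_point.
Proof.
move=> kI; have /card_gt0P[a aI] : (0 < #|I|)%N by rewrite (eqP kI).
exists (x I a / glued_point a).
split=> [|j jI]; first by rewrite mulf_neq0 ?invr_eq0 ?xU ?glued_point_neq0.
have [T /and4P[kT zT aT jT]] := ksub_through ord0 a j.
rewrite !(glued_pointE kT zT) //.
have -> : x I a / (x T a / x T ord0) * (x T j / x T ord0) = x I a * (x T j / x T a).
  by field; rewrite !xU.
by rewrite -(coord_ratio_indep kI kT aI jI aT jT) mulrC divfK ?xU.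
Qed.

Lemma minors_vanish_inV : inV k x.
Proof.
split=> //; exists glued_point; split; last exact: same_proj_point_glued.
by exists ord0; rewrite glued_point_neq0.
Qed.

End MinorsVanishInV.

Theorem mainTheorem2 (K : fieldType) (n k : nat) (hk1 : (1 < k)%N) (hkn : (k < n)%N)
    (x : coord_family K n) (hU : inU k x) :
  inV k x <->
  (forall I J : {set 'I_n.+1}, ksub k I -> ksub k J ->
     forall i j : 'I_n.+1, i \in I :&: J -> j \in I :&: J ->
       x I i * x J j - x I j * x J i = 0).
Proof.
split; first exact: inV_minors_vanish.
exact: minors_vanish_inV hk1 (ltnW hkn) hU.
Qed.
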